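(* Suppose $q$ is even. Let $\mathfrak q_1,\dots,\mathfrak q_s$ be distinct primes of $A$ ($s\ge0$), $e_1,\dots,e_s\ge1$, $\mathfrak m=\mathfrak q_1^{2e_1-1}\cdots\mathfrak q_s^{2e_s-1}$, and $\mathfrak n\in A$ coprime to $\mathfrak m$, such that $X^2+X-\mathfrak n/\mathfrak m$ is irreducible over $F$; let $K$ be its splitting field and $\mathcal O_K$ the integral closure of $A$ in $K$. Put $\mathcal D=\mathfrak q_1^{e_1}\cdots\mathfrak q_s^{e_s}$ and fix $\epsilon\in\mathbb F_q^\times$. Let $\alpha\in K$ be a root of $$f(X)=X^2+\epsilon\mathcal D X+\epsilon^2\mathfrak q_1\cdots\mathfrak q_s\mathfrak n.$$ Then $\mathcal O_K=A[\alpha]$.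
   Context: $A=\mathbb F_q[T]$, $F=\mathbb F_q(T)$, with $q$ a power of $2$; primes of $A$ are monic irreducible polynomials. (In the paper, $\mathcal D$ is identified with the different of $\mathcal O_K$ over $A$, and $\alpha=\epsilon\mathcal D\beta$ where $\beta^2+\beta=\mathfrak n/\mathfrak m$.) *)

From HB Require Import structures.
From mathcomp Require Import all_boot all_order all_algebra all_field.
Set Implicit Arguments. Unset Strict Implicit. Unset Printing Implicit Defensive.
Import GRing.Theory.
Local Open Scope ring_scope.

(* A = Fq[T] is {poly Fq}; F = Fq(T) is {fraction {poly Fq}}. *)
Definition fracA (Fq : finFieldType) : {poly Fq} -> {fraction {poly Fq}} :=
  fun a => FracField.tofrac a.

Definition embA (Fq : finFieldType) (L : fieldExtType {fraction {poly Fq}})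
  (a : {poly Fq}) : L := in_alg L (fracA a).

Definition integral_over_A (Fq : finFieldType)
  (L : fieldExtType {fraction {poly Fq}}) (x : L) : Prop :=
  exists p : {poly {poly Fq}}, p \is monic /\ root (map_poly (@embA Fq L) p) x.

Definition in_A_adjoin (Fq : finFieldType)
  (L : fieldExtType {fraction {poly Fq}}) (alpha x : L) : Prop :=
  exists p : {poly {poly Fq}}, x = (map_poly (@embA Fq L) p).[alpha].

From HB Require Import structures.
From mathcomp Require Import all_boot all_order all_algebra all_field.
From mathcomp Require Import ring zify.
Import GRing.Theory.
Local Open Scope ring_scope.
Set Implicit Arguments. Unset Strict Implicit. Unset Printing Implicit Defensive.

(* Since q is even, alpha/delta (delta = eps D) is a root of X^2 + X - n/m and the
   conjugate of alpha is alpha + delta.  Writing x = a + b alpha with a, b in F, integrality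
   of x passes to its conjugate, and A being integrally closed, the traces of x and of
   x alpha and the norm of x lie in A.  So r = a delta and u = b delta lie in A and
   delta^2 divides r^2 + delta r u + kappa u^2 (kappa = eps^2 q_1...q_s n).  Each q_i
   divides delta exactly e_i times and kappa exactly once; peeling off one q_i at a time
   shows q_i^e_i divides r and u, hence delta divides both and a, b lie in A. *)

Section PolyArith.
Variable K : fieldType.
Implicit Types p q r u m D : {poly K}.

Lemma irredp_dvdpM q r u : irreducible_poly q -> q %| r * u -> (q %| r) || (q %| u).
Proof.
move=> q_irr q_ru; have [//|q_r] := boolP (q %| r).
by rewrite -(Gauss_dvdpr _ (_ : coprimep q r)) // (irreducible_poly_coprime _ q_irr).
Qed.

Lemma coprimep_prodr (I : Type) (s : seq I) (P : pred I) (F : I -> {poly K}) p :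
  (forall i, P i -> coprimep p (F i)) -> coprimep p (\prod_(i <- s | P i) F i).
Proof.
move=> copF; apply: (big_ind (coprimep p)) => [|a b|//]; first exact: coprimep1.
by rewrite coprimepMr => -> ->.
Qed.

Lemma dvdp_prod_coprime (I : eqType) (s : seq I) (F : I -> {poly K}) p :
  uniq s -> {in s &, forall i j, i != j -> coprimep (F i) (F j)} ->
  (forall i, i \in s -> F i %| p) -> \prod_(i <- s) F i %| p.
Proof.
elim: s => [|i s IHs] /= => [_ _ _|/andP[i_s s_uniq] copF dvdF].
  by rewrite big_nil dvd1p.
rewrite big_cons Gauss_dvdp ?dvdF ?mem_head ?IHs //.
- by move=> j k js ks; apply: copF; rewrite inE ?js ?ks orbT.
- by move=> j js; apply: dvdF; rewrite inE js orbT.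
rewrite big_seq_cond; apply: coprimep_prodr => j /andP[js _].
by apply: copF; rewrite ?mem_head ?inE ?js ?orbT //; apply: contraNneq i_s => ->.
Qed.

Definition quad_form_descent D m :=
  forall r u, D ^+ 2 %| r ^+ 2 + D * r * u + m * u ^+ 2 -> (D %| r) && (D %| u).

Lemma quad_form_descent_scale (c : K) D m : c != 0 ->
  quad_form_descent D m -> quad_form_descent (c%:P * D) ((c ^+ 2)%:P * m).
Proof.
move=> c0 desc r u; rewrite !mul_polyC exprZn dvdpZl ?expf_neq0 // !dvdpZl //.
have -> : r ^+ 2 + c *: D * r * u + (c ^+ 2) *: m * u ^+ 2
        = r ^+ 2 + D * r * (c *: u) + m * (c *: u) ^+ 2.
  by rewrite -!mul_polyC (rmorphXn (@polyC K)); ring.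
by move/desc; rewrite dvdpZr.
Qed.
End PolyArith.

Section PrimeDescent.
Variables (K : fieldType) (q D m : {poly K}).
Hypotheses (q_irr : irreducible_poly q) (q_D : q %| D) (q_m : coprimep q m).

Lemma quad_form_dvdp_prime r u :
  q ^+ 2 %| r ^+ 2 + D * r * u + q * m * u ^+ 2 -> (q %| r) && (q %| u).
Proof.
have q0 : q != 0 by apply: irredp_neq0.
move=> H; have q_r : q %| r.
  have : q %| r ^+ 2 + D * r * u + q * m * u ^+ 2.
    by apply: dvdp_trans H; rewrite expr2 dvdp_mulIl.
  rewrite -addrA dvdp_addl; last first.
    by rewrite dvdp_add // !dvdp_mulr // dvdpp.
  by rewrite expr2 => /(irredp_dvdpM q_irr); rewrite orbb.
rewrite q_r /=; case/dvdpP: q_r H => r' ->.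
have -> : (r' * q) ^+ 2 + D * (r' * q) * u + q * m * u ^+ 2
        = q * (q * r' ^+ 2 + (D * r' * u + m * u ^+ 2)) by ring.
rewrite expr2 dvdp_mul2l // dvdp_addr ?dvdp_mulr ?dvdpp //.
rewrite dvdp_addr; last by rewrite !dvdp_mulr.
rewrite Gauss_dvdpr // expr2.
by move/(irredp_dvdpM q_irr); rewrite orbb.
Qed.

Lemma quad_form_dvdp_prime_pow (e : nat) r u :
  q ^+ (2 * e) %| r ^+ 2 + D * r * u + q * m * u ^+ 2 ->
  (q ^+ e %| r) && (q ^+ e %| u).
Proof.
elim: e r u => [|e IHe] r u; first by rewrite !expr0 !dvd1p.
move=> H; have /andP[/dvdpP[r' Er] /dvdpP[u' Eu]] : (q %| r) && (q %| u).
  by apply: quad_form_dvdp_prime; apply: dvdp_trans H; rewrite dvdp_exp2l // mulnS.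
suff /IHe /andP[] : q ^+ (2 * e) %| r' ^+ 2 + D * r' * u' + q * m * u' ^+ 2.
  by rewrite Er Eu !exprSr !dvdp_mul2r // ?irredp_neq0 // => -> ->.
move: H; rewrite Er Eu.
have -> : (r' * q) ^+ 2 + D * (r' * q) * (u' * q) + q * m * (u' * q) ^+ 2
        = (r' ^+ 2 + D * r' * u' + q * m * u' ^+ 2) * q ^+ 2 by ring.
by rewrite mulnS exprD mulrC dvdp_mul2r // expf_neq0 // irredp_neq0.
Qed.
End PrimeDescent.

Section ProductDescent.
Variables (K : fieldType) (I : finType) (qs : I -> {poly K}) (e : I -> nat).
Hypotheses (qs_monic : forall i, qs i \is monic)
  (qs_irr : forall i, irreducible_poly (qs i)) (qs_inj : injective qs)
  (e_gt0 : forall i, (0 < e i)%N).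

Lemma coprimep_qs i j : i != j -> coprimep (qs i) (qs j).
Proof.
move=> ij; rewrite irreducible_poly_coprime //; apply/negP => /(qs_irr j).
rewrite neq_ltn (qs_irr i).1 orbT eqp_monic // => /(_ isT) /eqP /qs_inj /eqP.
by rewrite (negbTE ij).
Qed.

Lemma prod_odd_pow_mul : \prod_i qs i * \prod_i qs i ^+ (2 * e i - 1)
  = (\prod_i qs i ^+ e i) ^+ 2.
Proof.
rewrite -big_split -prodrXl; apply: eq_bigr => i _ /=.
by rewrite -exprS -exprM; congr (_ ^+ _); have := e_gt0 i; lia.
Qed.

Lemma prod_qs_pow_neq0 (f : I -> nat) : \prod_i qs i ^+ f i != 0.
Proof. by apply/prodf_neq0 => i _; rewrite expf_neq0 // irredp_neq0. Qed.

Lemma quad_form_descent_prod n :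
  coprimep n (\prod_i qs i ^+ (2 * e i - 1)) ->
  quad_form_descent (\prod_i qs i ^+ e i) (\prod_i qs i * n).
Proof.
move=> n_cop r u H.
suff dvd_qs i : (qs i ^+ e i %| r) && (qs i ^+ e i %| u).
  have dvd_prod p : (forall i, qs i ^+ e i %| p) -> \prod_i qs i ^+ e i %| p.
    move=> dvdp; apply: dvdp_prod_coprime => [|i j _ _ ij|i _] //.
      exact: index_enum_uniq.
    by apply/coprimep_expl/coprimep_expr/coprimep_qs.
  by rewrite !dvd_prod // => i; case/andP: (dvd_qs i).
have qs_D : qs i %| \prod_i qs i ^+ e i.
  by rewrite (bigD1 i) //= dvdp_mulr // dvdp_exp ?dvdpp.
have qs_n : coprimep (qs i) n.
  rewrite coprimep_sym in n_cop; apply: coprimep_dvdr n_cop.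
  rewrite (bigD1 i) //= dvdp_mulr // dvdp_exp ?dvdpp //; have := e_gt0 i; lia.
apply: (quad_form_dvdp_prime_pow (qs_irr i) qs_D (m := \prod_(j | j != i) qs j * n)).
- rewrite coprimepMr qs_n andbT; apply: coprimep_prodr => j ji.
  by apply: coprimep_qs; rewrite eq_sym.
have Q_split : \prod_j qs j * n = qs i * (\prod_(j | j != i) qs j * n).
  by rewrite (bigD1 i) //= mulrA.
rewrite mulnC exprM; apply: dvdp_trans; last by rewrite -Q_split; exact: H.
by apply: dvdp_exp2r; rewrite (bigD1 i) //= dvdp_mulr.
Qed.
End ProductDescent.

Section FractionField.
Variable R : idomainType.
Local Notation tf := (@FracField.tofrac R).

Lemma tofrac_div_repr (t : {fraction R}) : exists x y, y != 0 /\ t = tf x / tf y.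
Proof.
elim/quotW: t => r; exists (\n_r), (\d_r); split; first exact: denom_ratioP.
have d0 : tf (\d_r) != 0 by rewrite tofrac_eq0 denom_ratioP.
apply: (canRL (mulfK d0)); unlock FracField.tofrac.
rewrite -[_ * _]/(FracField.mul _ _) !piE.
apply/eqmodP; rewrite /= FracField.equivfE /FracField.mulf /=.
by rewrite !numden_Ratio ?mulr1 ?oner_eq0 ?mulf_neq0 ?denom_ratioP // mulrC.
Qed.

Lemma horner_tofrac_div (P : {poly R}) (x y : R) (d : nat) :
  y != 0 -> (size P <= d.+1)%N ->
  tf y ^+ d * (map_poly tf P).[tf x / tf y]
    = tf (\sum_(i < d.+1) P`_i * x ^+ i * y ^+ (d - i)).
Proof.
move=> y0 sP; have ty0 : tf y != 0 by rewrite tofrac_eq0.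
have tf_inj : injective tf by move=> a b /eqP; rewrite tofrac_eq => /eqP.
have sPm : (size (map_poly tf P) <= d.+1)%N.
  by rewrite (size_map_inj_poly tf_inj) ?rmorph0.
rewrite (horner_coef_wide _ sPm) mulr_sumr rmorph_sum; apply: eq_bigr => i _.
rewrite coef_map /= !rmorphM !rmorphXn /= exprMn exprVn.
have -> : tf y ^+ d = tf y ^+ (d - i) * tf y ^+ i by rewrite -exprD subnK // -ltnS.
by field; rewrite expf_neq0.
Qed.
End FractionField.

Section PolyFraction.
Variable K : fieldType.
Local Notation tf := (@FracField.tofrac {poly K}).

Lemma tofrac_coprime_repr (t : {fraction {poly K}}) :
  exists x y, [/\ y != 0, coprimep x y & t = tf x / tf y].
Proof.
have [x [y [y0 ->]]] := tofrac_div_repr t.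
set g := gcdp x y; set x' := x %/ g; set y' := y %/ g.
have g0 : g != 0 by rewrite gcdp_eq0 negb_and y0 orbT.
have Ex : x = x' * g by rewrite divpK // dvdp_gcdl.
have Ey : y = y' * g by rewrite divpK // dvdp_gcdr.
exists x', y'; split.
- by apply: contraNneq y0 => y'0; rewrite Ey y'0 mul0r.
- by apply: coprimep_div_gcd; rewrite y0 orbT.
rewrite Ex Ey !rmorphM /= invfM mulrACA divff ?mulr1 //.
by rewrite tofrac_eq0.
Qed.

Lemma root_monic_tofrac (P : {poly {poly K}}) (t : {fraction {poly K}}) :
  P \is monic -> root (map_poly tf P) t -> exists u, t = tf u.
Proof.
move=> P_monic rootPt; have [x [y [y0 xy_cop Et]]] := tofrac_coprime_repr t.
pose d := (size P).-1.
have sP : size P = d.+1 by rewrite prednK // lt0n size_poly_eq0 monic_neq0.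
have := horner_tofrac_div x y0 (eq_leq sP).
rewrite -Et (rootP rootPt) mulr0 => /esym/eqP; rewrite tofrac_eq0.
rewrite big_ord_recr /= subnn expr0 mulr1 -lead_coefE (monicP P_monic) mul1r.
rewrite addr_eq0 => /eqP Exd.
have y_xd : y %| x ^+ d.
  rewrite -[x ^+ d]opprK -Exd dvdpNr.
  apply: (big_ind (dvdp y)) => [|a b|i _]; [exact: dvdp0 | exact: dvdp_add |].
  by rewrite dvdp_mull // dvdp_exp ?dvdpp // subn_gt0.
have /size_poly1P[c c0 Ey] : size y == 1.
  by rewrite -coprimepp (coprimep_dvdr y_xd) ?coprimep_expl.
exists (c^-1 *: x); rewrite Et Ey; apply: (canLR (mulfK _)).
  by rewrite tofrac_eq0 polyC_eq0.
by rewrite -rmorphM /= mulrC mul_polyC scalerA mulfV // scale1r.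
Qed.

Lemma tofrac_ratio_sqE (c : K) (D Q m n : {poly K}) : m != 0 -> Q * m = D ^+ 2 ->
  tf ((c ^+ 2)%:P * Q * n) = tf n / tf m * tf (c%:P * D) ^+ 2.
Proof.
move=> m0 QmE; apply: (mulIf (_ : tf m != 0)); first by rewrite tofrac_eq0.
rewrite [RHS]mulrAC divfK ?tofrac_eq0 // -rmorphXn -!rmorphM; congr (tf _).
by rewrite exprMn -QmE (rmorphXn (@polyC K)); ring.
Qed.
End PolyFraction.

Lemma irredp_noroot (F : fieldType) (p : {poly F}) (t : F) :
  irreducible_poly p -> size p != 2 -> ~~ root p t.
Proof.
move=> p_irr sp; apply/negP; rewrite -dvdp_XsubCl => /p_irr.
rewrite size_XsubC => /(_ isT) /eqp_size; rewrite size_XsubC => p2.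
by rewrite -p2 eqxx in sp.
Qed.

Section QuadraticExtension.
Variables (F : fieldType) (L : fieldExtType F).
Local Notation iota := (in_alg L).
Variables (delta kappa c : F) (alpha : L).
Hypotheses (F_char2 : 2 \in [pchar F]) (delta0 : delta != 0)
  (kappaE : kappa = c * delta ^+ 2)
  (AS_irr : irreducible_poly ('X^2 + 'X - c%:P))
  (alpha_root : alpha ^+ 2 + iota delta * alpha + iota kappa = 0).

Local Notation f := ('X^2 + delta *: 'X + kappa%:P : {poly F}).

Lemma pchar2_ext : 2 \in [pchar L].
Proof. by rewrite (pchar_lalg L). Qed.

Lemma root_AS_scaled : root (map_poly iota ('X^2 + 'X - c%:P)) (alpha / iota delta).
Proof.
have iota_d0 : iota delta != 0 by rewrite fmorph_eq0.
rewrite rootE rmorphB rmorphD /= map_polyXn map_polyX map_polyC !hornerE /=.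
have -> : (alpha / iota delta) ^+ 2 + alpha / iota delta - iota c
    = (alpha ^+ 2 + iota delta * alpha + iota kappa) / iota delta ^+ 2
      - (iota kappa + iota kappa) / iota delta ^+ 2.
  by rewrite kappaE rmorphM rmorphXn; field.
by rewrite alpha_root (addrr_pchar2 pchar2_ext) !mul0r subr0.
Qed.

Lemma alpha_notin_F t : alpha != iota t.
Proof.
apply/eqP => alphaE; have := root_AS_scaled; rewrite alphaE -fmorph_div fmorph_root.
apply/negP/irredp_noroot => //.
by rewrite -addrA size_addl ?size_polyXn // size_XsubC.
Qed.

Lemma alpha_coords_eq0 a b : iota a + iota b * alpha = 0 -> a = 0 /\ b = 0.
Proof.
move=> abE; have [b0|b0] := eqVneq b 0.
  by move: abE; rewrite b0 rmorph0 mul0r addr0 => /eqP; rewrite fmorph_eq0 => /eqP.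
case/eqP: (alpha_notin_F (- a / b)); apply: (mulfI (_ : iota b != 0)).
  by rewrite fmorph_eq0.
rewrite -rmorphM [b * _]mulrC divfK // rmorphN; apply/eqP.
by rewrite -addr_eq0 addrC abE.
Qed.

Lemma size_f : size f = 3.
Proof.
rewrite -addrA size_addl ?size_polyXn // (leq_ltn_trans (size_polyD _ _)) //.
by rewrite size_polyC size_scale // size_polyX; case: (kappa != 0).
Qed.

Lemma horner_f y : (map_poly iota f).[y] = y ^+ 2 + iota delta * y + iota kappa.
Proof. by rewrite !rmorphD /= map_polyXn map_polyZ map_polyX map_polyC !hornerE. Qed.

Lemma horner_modf y P : (map_poly iota f).[y] = 0 ->
  (map_poly iota P).[y] = iota (P %% f)`_0 + iota (P %% f)`_1 * y.
Proof.
move=> fy0; rewrite {1}(divp_eq P f) rmorphD rmorphM hornerD hornerM fy0 mulr0 add0r.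
have sPf : (size (map_poly iota (P %% f)) <= 2)%N.
  by rewrite size_map_poly -ltnS -[2.+1]size_f ltn_modp -size_poly_eq0 size_f.
rewrite (horner_coef_wide _ sPf) big_ord_recr big_ord_recr big_ord0 /= add0r.
by rewrite !coef_map /= expr0 expr1 mulr1.
Qed.

Lemma root_f_alpha : (map_poly iota f).[alpha] = 0.
Proof. by rewrite horner_f. Qed.

Lemma root_f_conj : (map_poly iota f).[alpha + iota delta] = 0.
Proof.
rewrite horner_f -[RHS]alpha_root.
have -> : (alpha + iota delta) ^+ 2 + iota delta * (alpha + iota delta) + iota kappa
  = alpha ^+ 2 + iota delta * alpha + iota kappa
    + ((iota delta * alpha + iota delta * alpha) + (iota delta ^+ 2 + iota delta ^+ 2)).
  by ring.
by rewrite !(addrr_pchar2 pchar2_ext) !addr0.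
Qed.

Lemma root_conj P : (map_poly iota P).[alpha] = 0 ->
  (map_poly iota P).[alpha + iota delta] = 0.
Proof.
rewrite (horner_modf _ root_f_alpha) (horner_modf _ root_f_conj).
by case/alpha_coords_eq0 => -> ->; rewrite rmorph0 mul0r addr0.
Qed.

Lemma alpha_coordsP :
  splittingFieldFor 1 (map_poly iota ('X^2 + 'X - c%:P)) fullv ->
  forall x, exists a b, x = iota a + iota b * alpha.
Proof.
have beta_in : alpha / iota delta \in <<1; alpha>>%VS.
  by rewrite -fmorphV mulrC mulr_algl memvZ // memv_adjoin.
have roots_in z : root (map_poly iota ('X^2 + 'X - c%:P)) z -> z \in <<1; alpha>>%VS.
  have := root_AS_scaled; set beta := alpha / iota delta in beta_in *.
  rewrite !rootE rmorphB rmorphD /= map_polyXn map_polyX map_polyC !hornerE /=.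
  move=> /eqP beta_root /eqP z_root.
  have : (z - beta) * (z - beta - 1) = 0.
    have -> : (z - beta) * (z - beta - 1) = (z ^+ 2 + z - iota c)
        - (beta ^+ 2 + beta - iota c) + 2%:R * (beta ^+ 2 - z * beta - z + beta).
      by ring.
    by rewrite z_root beta_root (pcharf0 pchar2_ext) subrr mul0r addr0.
  move/eqP; rewrite mulf_eq0 -addrA -opprD !subr_eq0 => /orP[] /eqP-> //.
  by rewrite memvD ?mem1v.
case=> rs AS_rs L_rs x; have : x \in <<1; alpha>>%VS.
  apply: subvP (memvf x); rewrite -L_rs; apply/Fadjoin_seqP; split; first exact: sub1v.
  by move=> z z_rs; apply: roots_in; rewrite (eqp_root AS_rs) root_prod_XsubC.
case/Fadjoin1_polyP => P ->; exists (P %% f)`_0, (P %% f)`_1.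
exact: horner_modf root_f_alpha.
Qed.
End QuadraticExtension.

Section IntegralClosure.
Variables (K : fieldType) (L : fieldExtType {fraction {poly K}}).
Local Notation tf := (@FracField.tofrac {poly K}).
Local Notation iota := (in_alg L).

Definition poly_alg : {rmorphism {poly K} -> L} := in_alg L \o tf.

Lemma integral_in_alg t : integralOver poly_alg (iota t) -> exists u, t = tf u.
Proof.
case=> P P_monic rootP; apply: (root_monic_tofrac P_monic).
by rewrite -(fmorph_root (in_alg L)) -map_poly_comp.
Qed.

Lemma horner_map_comp_lin (P : {poly {poly K}}) a b (y : L) :
  (map_poly iota (map_poly tf P \Po (a%:P + b *: 'X))).[y]
    = (map_poly poly_alg P).[iota a + iota b * y].
Proof.
rewrite map_comp_poly horner_comp -map_poly_comp rmorphD /=.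
by rewrite map_polyC map_polyZ map_polyX !hornerE.
Qed.

Variables (d k : {poly K}) (c : {fraction {poly K}}) (alpha : L).
Hypotheses (F_char2 : 2 \in [pchar {fraction {poly K}}]) (d0 : d != 0)
  (kE : tf k = c * tf d ^+ 2) (AS_irr : irreducible_poly ('X^2 + 'X - c%:P))
  (alpha_root : alpha ^+ 2 + iota (tf d) * alpha + iota (tf k) = 0).

Let td0 : tf d != 0. Proof. by rewrite tofrac_eq0. Qed.

Lemma integral_alpha : integralOver poly_alg alpha.
Proof.
exists ('X^2 + d *: 'X + k%:P); last first.
  rewrite /root !rmorphD /= map_polyXn map_polyZ map_polyX map_polyC !hornerE.
  exact/eqP.
rewrite -addrA monicE lead_coefDl ?lead_coefXn // size_polyXn.
rewrite (leq_ltn_trans (size_polyD _ _)) // size_polyC gtn_max.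
by rewrite (leq_ltn_trans (size_scale_leq _ _)) ?size_polyX //; case: (_ != 0).
Qed.

Lemma integral_conj a b : integralOver poly_alg (iota a + iota b * alpha) ->
  integralOver poly_alg (iota a + iota b * (alpha + iota (tf d))).
Proof.
case=> P P_monic rootP; exists P => //; apply/eqP; rewrite -horner_map_comp_lin.
apply: (root_conj F_char2 td0 kE AS_irr alpha_root).
by rewrite horner_map_comp_lin; apply/eqP.
Qed.

Lemma integral_trace a b : integralOver poly_alg (iota a + iota b * alpha) ->
  exists u, b * tf d = tf u.
Proof.
move=> x_int; apply: integral_in_alg.
have -> : iota (b * tf d)
    = iota a + iota b * alpha + (iota a + iota b * (alpha + iota (tf d))).
  have -> : iota a + iota b * alpha + (iota a + iota b * (alpha + iota (tf d)))
      = iota b * iota (tf d) + 2%:R * (iota a + iota b * alpha) by ring.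
  by rewrite (pcharf0 (pchar2_ext L F_char2)) mul0r addr0 rmorphM.
exact/integral_add/integral_conj.
Qed.

Lemma integral_norm a b : integralOver poly_alg (iota a + iota b * alpha) ->
  exists u, a ^+ 2 + a * b * tf d + b ^+ 2 * tf k = tf u.
Proof.
move=> x_int; apply: integral_in_alg.
have -> : iota (a ^+ 2 + a * b * tf d + b ^+ 2 * tf k)
    = (iota a + iota b * alpha) * (iota a + iota b * (alpha + iota (tf d))).
  have -> : (iota a + iota b * alpha) * (iota a + iota b * (alpha + iota (tf d)))
      = iota a ^+ 2 + iota a * iota b * iota (tf d) + iota b ^+ 2 * iota (tf k)
        + iota b ^+ 2 * (alpha ^+ 2 + iota (tf d) * alpha + iota (tf k))
        + 2%:R * (iota a * iota b * alpha - iota b ^+ 2 * iota (tf k)) by ring.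
  rewrite alpha_root (pcharf0 (pchar2_ext L F_char2)) mulr0 mul0r !addr0.
  by rewrite !expr2 !rmorphD !rmorphM.
exact/integral_mul/integral_conj.
Qed.

Lemma mul_alpha_coords a b :
  (iota a + iota b * alpha) * alpha = iota (b * tf k) + iota (a + b * tf d) * alpha.
Proof.
have -> : (iota a + iota b * alpha) * alpha
    = iota b * iota (tf k) + (iota a + iota b * iota (tf d)) * alpha
      + iota b * (alpha ^+ 2 + iota (tf d) * alpha + iota (tf k))
      - 2%:R * (iota b * (iota (tf k) + iota (tf d) * alpha)) by ring.
rewrite alpha_root (pcharf0 (pchar2_ext L F_char2)) !mul0r mulr0 addr0 subr0.
by rewrite -!rmorphM -rmorphD.
Qed.

Lemma integral_coords a b : quad_form_descent d k ->
  integralOver poly_alg (iota a + iota b * alpha) ->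
  (exists u, a = tf u) /\ (exists v, b = tf v).
Proof.
move=> descent x_int.
have tf_inj : injective tf by move=> u v /eqP; rewrite tofrac_eq => /eqP.
have [U bE] := integral_trace x_int.
have [N normE] := integral_norm x_int.
have := integral_mul x_int integral_alpha.
rewrite mul_alpha_coords => /integral_trace[T abE].
have [R aE] : exists R, a * tf d = tf R.
  by exists (T - U * d); rewrite rmorphB rmorphM /= -abE -bE; ring.
have : d ^+ 2 %| R ^+ 2 + d * R * U + k * U ^+ 2.
  apply/dvdpP; exists N; apply: tf_inj.
  rewrite !expr2 !rmorphD !rmorphM /= -aE -bE -normE; ring.
case/descent/andP => /dvdpP[R' RE] /dvdpP[U' UE].
split; [exists R' | exists U']; apply: (mulIf td0).
  by rewrite aE RE rmorphM.
by rewrite bE UE rmorphM.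
Qed.
End IntegralClosure.

Lemma integral_over_AP (Fq : finFieldType) (L : fieldExtType {fraction {poly Fq}}) x :
  integral_over_A x <-> integralOver (poly_alg L) x.
Proof. by split=> [[P [P_monic rootP]] | [P P_monic rootP]]; exists P. Qed.

Unset Implicit Arguments. Set Strict Implicit.

Theorem lemma5p1
  (Fq : finFieldType) (char2 : 2%N \in [pchar Fq])
  (L : fieldExtType {fraction {poly Fq}})
  (s : nat) (qs : 'I_s -> {poly Fq}) (e : 'I_s -> nat)
  (Hqmon : forall i, qs i \is monic)
  (Hqirr : forall i, irreducible_poly (qs i))
  (Hqdist : injective qs)
  (He : forall i, (1 <= e i)%N)
  (n : {poly Fq})
  (Hcop : coprimep n (\prod_(i < s) qs i ^+ (2 * e i - 1)))
  (Hirr : irreducible_poly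
            ('X^2 + 'X - (fracA n / fracA (\prod_(i < s) qs i ^+ (2 * e i - 1)))%:P))
  (HK : splittingFieldFor 1%VS
          (map_poly (in_alg L)
            ('X^2 + 'X - (fracA n / fracA (\prod_(i < s) qs i ^+ (2 * e i - 1)))%:P))
          fullv)
  (eps : Fq) (Heps : eps != 0)
  (alpha : L)
  (Halpha : alpha ^+ 2
            + embA L (eps%:P * \prod_(i < s) qs i ^+ e i) * alpha
            + embA L ((eps ^+ 2)%:P * (\prod_(i < s) qs i) * n) = 0) :
  forall x : L, integral_over_A x <-> in_A_adjoin alpha x.
Proof.
have F_char2 : 2 \in [pchar {fraction {poly Fq}}].
  by rewrite (fmorph_pchar (@FracField.tofrac _ \o polyC : {rmorphism Fq -> _})).
have d0 : eps%:P * \prod_i qs i ^+ e i != 0.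
  by rewrite mulf_neq0 ?polyC_eq0 ?prod_qs_pow_neq0.
have kE := tofrac_ratio_sqE eps n (prod_qs_pow_neq0 Hqirr (fun i => 2 * e i - 1)%N)
  (prod_odd_pow_mul qs He).
have descent : quad_form_descent (eps%:P * \prod_i qs i ^+ e i)
    ((eps ^+ 2)%:P * \prod_i qs i * n).
  rewrite -mulrA; apply: quad_form_descent_scale Heps _.
  exact: quad_form_descent_prod.
move=> x; apply: iff_trans (integral_over_AP x) _; split=> [x_int | [p ->]].
- have [|a [b xE]] := alpha_coordsP F_char2 _ kE Halpha HK x.
    by rewrite tofrac_eq0.
  rewrite xE in x_int *.
  have [[u ->] [v ->]] := integral_coords F_char2 d0 kE Hirr Halpha descent x_int.
  exists (u%:P + v%:P * 'X).
  rewrite -[map_poly (embA L) _]/(map_poly (poly_alg L) _).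
  by rewrite rmorphD rmorphM /= !map_polyC map_polyX !hornerE.
- rewrite -[map_poly (embA L) _]/(map_poly (poly_alg L) _).
  apply: integral_horner (integral_alpha Halpha).
  by apply/integral_poly => i; rewrite coef_map; exact: integral_id.
Qed.
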